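(* Let $R$ be a tolerance relation on $X=\{1,\ldots,n\}$ and assume that every $a\in A(R)$ with $a\succeq0$ is of the form $a=\sum_{i=1}^k b_i\star b_i^*$ for some $b_1,\ldots,b_k\in A(R)$. Then the graph of $R$ has a dominant vertex in each connected component.
   Context: A tolerance relation is a reflexive and symmetric relation; its graph has an edge between $i\ne j$ whenever $(i,j)\in R$; a dominant vertex is a vertex adjacent to all other vertices of its connected component. $T(b)=\sum_{(i,j)\in R}E_{ii}bE_{jj}$ for $b\in M_n(\mathbb{C})$, $A(R)=T(M_n(\mathbb{C}))$ with product $a\star b=T(ab)$ and involution the conjugate transpose. For $a\in A(R)$, $a\succeq0$ means $a=T(b)$ for some positive semidefinite $b\in M_n(\mathbb{C})$. *)

(* Complex numbers are modelled as R[i] = complex R for an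
   arbitrary R : realType (so in particular the classical reals). *)
From HB Require Import structures.
From mathcomp Require Import all_boot all_order all_algebra.
From mathcomp Require Import reals.
From mathcomp Require Export complex.
Set Implicit Arguments. Unset Strict Implicit. Unset Printing Implicit Defensive.
Import Order.TTheory GRing.Theory Num.Theory.
Local Open Scope ring_scope.

Section Tolerance.
Variables (C : numClosedFieldType) (n : nat).

Definition tolerance (R : rel 'I_n) : Prop := reflexive R /\ symmetric R.

(* T(b) = \sum_{(i,j) in R} E_ii b E_jj : keep the (i,j) entry iff (i,j) in R *)
Definition Tmap (R : rel 'I_n) (b : 'M[C]_n) : 'M[C]_n :=
  \matrix_(i, j) (if R i j then b i j else 0).

Definition inA (R : rel 'I_n) (a : 'M[C]_n) : Prop := exists b, a = Tmap R b.

Definition starA (R : rel 'I_n) (a b : 'M[C]_n) : 'M[C]_n := Tmap R (a *m b).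

Definition adj (a : 'M[C]_n) : 'M[C]_n := (map_mx Num.conj a)^T.

Definition psd (b : 'M[C]_n) : Prop :=
  adj b = b /\ forall v : 'cV[C]_n, 0 <= ((map_mx Num.conj v)^T *m b *m v) 0 0.

Definition psdA (R : rel 'I_n) (a : 'M[C]_n) : Prop := exists b, psd b /\ a = Tmap R b.

Definition sosA (R : rel 'I_n) (a : 'M[C]_n) : Prop :=
  exists k (b : 'I_k -> 'M[C]_n),
    (forall i, inA R (b i)) /\ a = \sum_(i < k) starA R (b i) (adj (b i)).

End Tolerance.

Definition graph_edge n (R : rel 'I_n) : rel 'I_n := fun i j => (i != j) && R i j.

Definition dominant n (R : rel 'I_n) (v : 'I_n) : Prop :=
  forall w, connect (graph_edge R) v w -> w != v -> graph_edge R v w.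

Definition dominant_in_each_component n (R : rel 'I_n) : Prop :=
  forall x : 'I_n, exists2 v, connect (graph_edge R) x v & dominant R v.

From HB Require Import structures.
From mathcomp Require Import all_boot all_order all_algebra.
From mathcomp Require Import reals complex.
Set Implicit Arguments. Unset Strict Implicit. Unset Printing Implicit Defensive.
Import Order.TTheory GRing.Theory Num.Theory Num.Def.
Local Open Scope ring_scope.

(* Suppose the connected component of x0 has no dominant vertex. Let A be the
   adjacency matrix of that component, l its largest eigenvalue and v an
   eigenvector. Every nonzero vector supported in the closed neighbourhood of
   a vertex has Rayleigh quotient for A strictly below l, and finitely many
   neighbourhoods give a uniform t < l. Then W = t - A vanishes off R, the
   functional a |-> tr (W a) is nonnegative on each b b^* with b in A(R)
   (whose conjugate rows are supported in closed neighbourhoods), yet on the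
   positive element T(v^* v) it equals (t - l) |v|^2 < 0. *)

Section QuadraticForm.
Variables (C : numClosedFieldType) (n : nat).
Implicit Types (H : 'M[C]_n) (x : 'rV[C]_n).

Definition qform H x : C := (x *m H *m map_mx conjC x^T) 0 0.
Definition sqnorm x : C := \sum_i `|x 0 i| ^+ 2.

Lemma qformE H x : qform H x = \sum_i \sum_j x 0 i * H i j * (x 0 j)^*.
Proof.
rewrite /qform mxE [RHS]exchange_big /=; apply: eq_bigr => j _.
by rewrite mxE big_distrl /=; apply: eq_bigr => i _; rewrite !mxE.
Qed.

Lemma qform_diag (d : 'rV[C]_n) x :
  qform (diag_mx d) x = \sum_i d 0 i * `|x 0 i| ^+ 2.
Proof.
rewrite qformE; apply: eq_bigr => i _.
rewrite (bigD1 i) //= big1 ?addr0; last first.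
  by move=> j /negPf ji; rewrite !mxE eq_sym ji mulr0n mulr0 mul0r.
by rewrite !mxE eqxx mulr1n normCK mulrCA mulrA.
Qed.

Lemma qform_scalar (t : C) x : qform t%:M x = t * sqnorm x.
Proof.
have -> : t%:M = diag_mx (const_mx t) :> 'M[C]_n.
  by apply/matrixP => i j; rewrite !mxE.
by rewrite qform_diag mulr_sumr; apply: eq_bigr => i _; rewrite mxE.
Qed.

Lemma qformB H1 H2 x : qform (H1 - H2) x = qform H1 x - qform H2 x.
Proof. by rewrite /qform mulmxBr mulmxBl !mxE. Qed.

Lemma qform_eigen H x l : x *m H = l *: x -> qform H x = l * sqnorm x.
Proof.
move=> xH; have := qform_scalar 1 x; rewrite mul1r /qform mulmx1 => <-.
by rewrite xH -scalemxAl mxE.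
Qed.

Lemma qform0 x : qform 0 x = 0.
Proof. by rewrite /qform mulmx0 mul0mx mxE. Qed.

Lemma qform_delta H i : qform H (delta_mx 0 i) = H i i.
Proof.
rewrite /qform -rowE trmx_delta.
have -> : map_mx conjC (delta_mx i 0) = delta_mx i 0 :> 'cV[C]_n.
  by apply/matrixP => j k; rewrite !mxE rmorph_nat.
by rewrite -colE !mxE.
Qed.

Lemma sqnorm_ge0 x : 0 <= sqnorm x.
Proof. by apply: sumr_ge0 => i _; rewrite exprn_ge0. Qed.

Lemma sqnorm_eq0 x : (sqnorm x == 0) = (x == 0).
Proof.
apply/idP/eqP => [/eqP/psumr_eq0P x0|->]; last first.
  by rewrite /sqnorm big1 // => i _; rewrite mxE normr0 expr0n.
apply/rowP => i; apply/eqP; rewrite mxE -normr_eq0 -[_ == 0](expf_eq0 _ 2).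
by rewrite x0 // => j _; rewrite exprn_ge0.
Qed.

Lemma sqnorm_gt0 x : (0 < sqnorm x) = (x != 0).
Proof. by rewrite lt_def sqnorm_ge0 sqnorm_eq0 andbT. Qed.

Lemma sqnorm_delta i : sqnorm (delta_mx 0 i) = 1.
Proof. by rewrite -[LHS]mul1r -qform_scalar qform_delta mxE eqxx. Qed.

Lemma sqnorm_normr x : sqnorm (map_mx normr x) = sqnorm x.
Proof. by apply: eq_bigr => i _; rewrite mxE normr_id. Qed.

Lemma qform_normr_ge H x : (forall i j, 0 <= H i j) ->
  `|qform H x| <= qform H (map_mx normr x).
Proof.
move=> H_ge0; rewrite !qformE; apply: le_trans (ler_norm_sum _ _ _) _.
apply: ler_sum => i _; apply: le_trans (ler_norm_sum _ _ _) _.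
apply: ler_sum => j _; rewrite !normrM norm_conjC !mxE conj_normC.
by rewrite (ger0_norm (H_ge0 i j)).
Qed.

Lemma qform_conj_unitary (P : 'M[C]_n) H x :
  qform (map_mx conjC P^T *m H *m P) x = qform H (x *m map_mx conjC P^T).
Proof.
rewrite /qform !mulmxA; congr (_ 0 0); rewrite -!mulmxA; congr (_ *m _).
by rewrite trmx_mul map_mxM -map_trmx trmxK -map_mx_comp (map_mx_id (@conjCK _)).
Qed.

Lemma sqnorm_unitary (P : 'M[C]_n) x : map_mx conjC P^T *m P = 1%:M ->
  sqnorm (x *m map_mx conjC P^T) = sqnorm x.
Proof.
move=> PtP; rewrite -[LHS]mul1r -[RHS]mul1r -!qform_scalar -qform_conj_unitary.
by rewrite mulmx1 PtP.
Qed.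

Lemma exists_real_argmax (I : finType) (i0 : I) (f : I -> C) :
  (forall i, f i \is Num.real) -> exists i, forall j, f j <= f i.
Proof.
move=> f_real; suff [i f_le] : exists i, forall j, j \in enum I -> f j <= f i.
  by exists i => j; apply: f_le; rewrite mem_enum.
elim: (enum I) => [|a s [i f_le]]; first by exists i0.
have /orP[le_ai|le_ia] := real_leVge (f_real a) (f_real i).
  by exists i => j; rewrite inE => /orP[/eqP->//|]; apply: f_le.
exists a => j; rewrite inE => /orP[/eqP->//|/f_le le_ji].
exact: le_trans le_ji le_ia.
Qed.

Lemma hermitian_unitary_diag H : H \is hermsymmx ->
  exists P (d : 'rV[C]_n), [/\ map_mx conjC P^T *m P = 1%:M,
    P *m map_mx conjC P^T = 1%:M, forall i, d 0 i \is Num.real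
    & H = map_mx conjC P^T *m diag_mx d *m P].
Proof.
move=> herm_H; have P_unitary := spectral_unitarymx H.
exists (spectralmx H), (spectral_diag H); split.
- by rewrite -invmx_unitary // mulVmx // unitarymx_unit.
- exact: unitarymxP.
- by move=> i; apply: (mxOverP (hermitian_spectral_diag_real herm_H)).
- by rewrite -invmx_unitary //; apply/orthomx_spectralP/hermitian_normalmx.
Qed.

Lemma hermitian_top_eigenvalue H (i0 : 'I_n) : H \is hermsymmx ->
  exists l, [/\ l \is Num.real, exists2 v : 'rV_n, v != 0 & v *m H = l *: v,
    forall x, qform H x <= l * sqnorm x
    & forall x, qform H x = l * sqnorm x -> x *m H = l *: x].
Proof.
move=> /hermitian_unitary_diag[P [d [PtP PPt d_real HE]]].
set Pt := map_mx conjC P^T in PtP PPt HE.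
have [i1 d_le] := exists_real_argmax i0 d_real.
have gapE x : d 0 i1 * sqnorm x - qform H x =
    \sum_i (d 0 i1 - d 0 i) * `|(x *m Pt) 0 i| ^+ 2.
  rewrite HE qform_conj_unitary qform_diag -(sqnorm_unitary x PtP) mulr_sumr.
  by rewrite -sumrB; apply: eq_bigr => i _; rewrite mulrBl.
have gap_ge0 x i : 0 <= (d 0 i1 - d 0 i) * `|(x *m Pt) 0 i| ^+ 2.
  by rewrite mulr_ge0 ?exprn_ge0 ?subr_ge0.
exists (d 0 i1); split=> [//||x|x].
- exists (row i1 P).
    apply: contraTneq (oner_neq0 C) => rowP0.
    have := row_mul i1 P Pt; rewrite PPt rowP0 mul0mx => /rowP/(_ i1).
    by rewrite !mxE eqxx => /eqP; rewrite negbK.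
  rewrite HE -row_mul !mulmxA PPt mul1mx mul_diag_mx.
  by apply/rowP => j; rewrite !mxE.
- by rewrite -subr_ge0 gapE sumr_ge0.
move=> /eqP; rewrite eq_sym -subr_eq0 gapE.
move=> /eqP/(psumr_eq0P (fun i _ => gap_ge0 x i)) gap0.
have /(congr1 (mulmx^~ P)) : (x *m Pt) *m diag_mx d = d 0 i1 *: (x *m Pt).
  apply/rowP => i; rewrite mul_mx_diag !mxE.
  have /eqP := gap0 i isT; rewrite mulf_eq0 subr_eq0 => /orP[/eqP->|].
    by rewrite mulrC.
  by rewrite expf_eq0 normr_eq0 mxE => /andP[_ /eqP->]; rewrite mul0r mulr0.
by rewrite -scalemxAl -[x *m Pt *m P]mulmxA PtP mulmx1 => <-; rewrite HE !mulmxA.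
Qed.

End QuadraticForm.

Lemma exists_uniform_lt (C : numDomainType) (I : finType) (l : C)
    (G : I -> C -> Prop) : l \is Num.real ->
  (forall k t t', t <= t' -> G k t -> G k t') ->
  (forall k, exists2 mu, mu < l & G k mu) ->
  exists2 t, t < l & forall k, G k t.
Proof.
move=> l_real G_mono G_lt.
suff [t t_lt Gt] : exists2 t, t < l & forall k, k \in enum I -> G k t.
  by exists t => // k; apply: Gt; rewrite mem_enum.
elim: (enum I) => [|a s [t t_lt Gt]].
  by exists (l - 1) => //; rewrite gtrDl ltrN10.
have [mu mu_lt Gmu] := G_lt a.
have t_real : t \is Num.real by rewrite (ler_real (ltW t_lt)).
have mu_real : mu \is Num.real by rewrite (ler_real (ltW mu_lt)).
have /orP[le_tmu|le_mut] := real_leVge t_real mu_real.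
  by exists mu => // k; rewrite inE => /orP[/eqP->//|/Gt]; apply: G_mono.
by exists t => // k; rewrite inE => /orP[/eqP->|/Gt//]; apply: G_mono Gmu.
Qed.

Section Graph.
Variables (n : nat) (R : rel 'I_n).
Local Notation e := (graph_edge R).

Definition dominantb (v : 'I_n) : bool :=
  [forall w, connect e v w ==> (w != v) ==> e v w].

Lemma dominantP v : reflect (dominant R v) (dominantb v).
Proof.
apply: (iffP forallP) => [v_dom w vw wv | v_dom w].
  by have /implyP/(_ vw)/implyP/(_ wv) := v_dom w.
by apply/implyP => vw; apply/implyP; apply: v_dom.
Qed.

Lemma not_dominant_witness v : ~ dominant R v ->
  exists w, [/\ connect e v w, w != v & ~~ e v w].
Proof.
move/dominantP; rewrite negb_forall => /existsP[w].
by rewrite !negb_imply => /and3P[vw wv not_vw]; exists w.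
Qed.

Hypothesis R_tol : tolerance R.

Lemma graph_edge_sym : symmetric e.
Proof. by case: R_tol => _ R_sym i j; rewrite /graph_edge eq_sym R_sym. Qed.

Lemma connect_of_rel i j : R i j -> connect e i j.
Proof.
move=> Rij; have [->|ij] := eqVneq i j; first exact: connect0.
by apply: connect1; rewrite /graph_edge ij.
Qed.

End Graph.

Lemma eigen_support_closed (C : numClosedFieldType) n (A : 'M[C]_n)
    (u : 'rV[C]_n) l a b :
  (forall i j, 0 <= A i j) -> (forall i, 0 <= u 0 i) -> u *m A = l *: u ->
  u 0 a != 0 -> A a b != 0 -> u 0 b != 0.
Proof.
move=> A_ge0 u_ge0 uA ua Aab; have /rowP/(_ b) := uA; rewrite !mxE => ulb.
apply: contraTneq isT => ub0; move: ulb; rewrite ub0 mulr0 => sum0.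
have term_ge0 i : true -> 0 <= u 0 i * A i b by rewrite mulr_ge0.
have /eqP := psumr_eq0P term_ge0 sum0 (i := a) isT; rewrite mulf_eq0 (negPf ua).
by rewrite (negPf Aab).
Qed.

Section Adjacency.
Variables (C : numClosedFieldType) (n : nat) (R : rel 'I_n).
Local Notation e := (graph_edge R).
Implicit Types (S T : pred 'I_n) (x : 'rV[C]_n).

Definition adjmx S : 'M[C]_n := \matrix_(i, j) (S i && S j && e i j)%:R.

Lemma adjmx_ge0 S i j : 0 <= adjmx S i j.
Proof. by rewrite mxE ler0n. Qed.

Lemma adjmx_hermitian S : tolerance R -> adjmx S \is hermsymmx.
Proof.
move=> R_tol; apply/is_hermitianmxP; rewrite expr0 scale1r.
by apply/matrixP => i j; rewrite !mxE conjC_nat graph_edge_sym // (andbC (S i)).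
Qed.

Lemma qform_adjmx_supp S T x : (forall i, x 0 i != 0 -> T i) ->
  qform (adjmx S) x = qform (adjmx [predI S & T]) x.
Proof.
move=> x_supp; rewrite !qformE; apply: eq_bigr => i _; apply: eq_bigr => j _.
have [->|/x_supp Ti] := eqVneq (x 0 i) 0; first by rewrite !mul0r.
have [->|/x_supp Tj] := eqVneq (x 0 j) 0; first by rewrite conjC0 !mulr0.
by rewrite !mxE /= !unfold_in Ti Tj !andbT.
Qed.

Lemma eq_adjmx S T : S =1 T -> adjmx S = adjmx T.
Proof. by move=> ST; apply/matrixP => i j; rewrite !mxE !ST. Qed.

Lemma adjmx_pred0 S : (forall i, ~~ S i) -> adjmx S = 0.
Proof. by move=> S0; apply/matrixP => i j; rewrite !mxE (negPf (S0 i)). Qed.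

Lemma adjmx_eigen_supp S x l : l != 0 -> x *m adjmx S = l *: x ->
  forall j, x 0 j != 0 -> S j.
Proof.
move=> l0 xA j; apply: contraNT => Sj; have /rowP/(_ j) := xA.
rewrite !mxE big1 => [/esym/eqP|i _]; last by rewrite mxE (negPf Sj) andbF mulr0.
by rewrite mulf_eq0 (negPf l0).
Qed.

End Adjacency.

Section TraceFunctional.
Variables (C : numClosedFieldType) (n : nat) (R : rel 'I_n).
Implicit Types (W X b c : 'M[C]_n) (v x : 'rV[C]_n).

Lemma mxtrace_mul_Tmap W X : (forall i j, ~~ R j i -> W i j = 0) ->
  \tr (W *m Tmap R X) = \tr (W *m X).
Proof.
move=> W_supp; apply: eq_bigr => i _; rewrite !mxE; apply: eq_bigr => j _.
by rewrite mxE; case: ifPn => // /W_supp->; rewrite !mul0r.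
Qed.

Lemma mxtrace_mul_gram W b :
  \tr (W *m (b *m adj b)) = \sum_m qform W (row m (adj b)).
Proof.
rewrite mulmxA mxtrace_mulC mulmxA; apply: eq_bigr => m _.
rewrite qformE mxE [RHS]exchange_big /=; apply: eq_bigr => j _.
rewrite mxE big_distrl /=; apply: eq_bigr => i _.
by rewrite /adj !mxE conjCK.
Qed.

Lemma mxtrace_mul_rank1 W v : \tr (W *m (map_mx conjC v^T *m v)) = qform W v.
Proof. by rewrite mulmxA mxtrace_mulC mulmxA /mxtrace big_ord1. Qed.

Lemma psd_rank1 v : psd (map_mx conjC v^T *m v).
Proof.
split=> [|z].
  apply/matrixP => i j; rewrite /adj !mxE !big_ord1 !mxE.
  by rewrite rmorphM /= conjCK mulrC.
rewrite !mulmxA -[_ *m v *m z]mulmxA map_trmx -map_mxM -trmx_mul.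
by rewrite mxE big_ord1 !mxE mulrC mul_conjC_ge0.
Qed.

Lemma row_adj_Tmap_supp c m i : (row m (adj (Tmap R c))) 0 i != 0 -> R i m.
Proof. by rewrite /adj !mxE; case: ifP => // _; rewrite conjC0 eqxx. Qed.

Lemma sosA_mxtrace_ge0 W a : (forall i j, ~~ R j i -> W i j = 0) ->
  (forall m x, (forall i, x 0 i != 0 -> R i m) -> 0 <= qform W x) ->
  sosA R a -> 0 <= \tr (W *m a).
Proof.
move=> W_supp W_local [k [b [b_inA ->]]].
rewrite mulmx_sumr raddf_sum; apply: sumr_ge0 => i _.
rewrite /= /starA mxtrace_mul_Tmap //; have [c ->] := b_inA i.
rewrite mxtrace_mul_gram; apply: sumr_ge0 => m _.
exact/W_local/row_adj_Tmap_supp.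
Qed.

End TraceFunctional.

Section Component.
Variables (C : numClosedFieldType) (n : nat) (R : rel 'I_n) (x0 : 'I_n).
Hypothesis R_tol : tolerance R.
Local Notation e := (graph_edge R).
Local Notation comp := (connect e x0).
Hypothesis no_dominant : forall k, comp k -> ~ dominant R k.
Local Notation A := (adjmx C R comp).
Implicit Types x : 'rV[C]_n.

Lemma comp_rel_closed a b : comp a -> R a b -> comp b.
Proof. by move=> x0a /connect_of_rel; apply: connect_trans. Qed.

Definition local_bound k t : Prop :=
  forall x, (forall i, x 0 i != 0 -> R i k) -> qform A x <= t * sqnorm x.

Lemma local_bound_mono k t t' : t <= t' -> local_bound k t -> local_bound k t'.
Proof.
move=> le_tt' t_bound x x_supp; apply: le_trans (t_bound x x_supp) _.
by rewrite ler_wpM2r ?sqnorm_ge0.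
Qed.

Section TopEigenvalue.
Variable l : C.
Hypotheses (l_real : l \is Num.real) (l_top : forall x, qform A x <= l * sqnorm x)
  (l_eigen : forall x, qform A x = l * sqnorm x -> x *m A = l *: x).

Lemma qform_local_lt k x : comp k -> x != 0 ->
  (forall i, x 0 i != 0 -> R i k) -> qform A x < l * sqnorm x.
Proof.
(* Otherwise |x| is a nonnegative l-eigenvector of A, whose support spreads
   along the edges of the component up to a vertex not adjacent to k. *)
move=> x0k x_neq0 x_supp; rewrite lt_def l_top andbT; apply/eqP => top_x.
pose u := map_mx normr x.
have u_eigen : u *m A = l *: u.
  apply: l_eigen; apply/le_anti; rewrite l_top /= sqnorm_normr top_x.
  apply: le_trans (qform_normr_ge x (@adjmx_ge0 _ _ _ _)).
  have qx_real : qform A x \is Num.real.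
    by rewrite -top_x; apply: rpredM => //; apply: ger0_real; apply: sqnorm_ge0.
  exact: real_ler_norm.
pose supp := [pred i | comp i && (u 0 i != 0)].
have supp_closed : closed e supp.
  apply: (intro_closed (sym_connect_sym (graph_edge_sym R_tol))).
  move=> a b ab /andP[x0a ua]; have x0b := connect_trans x0a (connect1 ab).
  rewrite inE x0b.
  apply: eigen_support_closed (@adjmx_ge0 _ _ _ _) _ u_eigen ua _.
    by move=> i; rewrite mxE normr_ge0.
  by rewrite mxE x0a x0b ab oner_eq0.
have /existsP[i1 xi1] : [exists i, x 0 i != 0].
  apply: contraNT x_neq0 => /existsPn x_eq0; apply/eqP/rowP => i.
  by rewrite mxE; apply/eqP/negPn.
have [w [kw wk not_kw]] := not_dominant_witness (no_dominant x0k).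
have i1w : connect e i1 w := connect_trans (connect_of_rel (x_supp _ xi1)) kw.
have x0i1 : comp i1.
  by case: R_tol => _ R_sym; apply: comp_rel_closed x0k _; rewrite R_sym x_supp.
have := closed_connect supp_closed i1w; rewrite !inE x0i1 !mxE normr_eq0 xi1.
move=> /esym/andP[_]; rewrite normr_eq0 => /x_supp Rwk.
by move: not_kw; rewrite graph_edge_sym // /graph_edge wk Rwk.
Qed.

Lemma top_eigenvalue_gt0 : 0 < l.
Proof.
have delta_supp i : (delta_mx 0 x0 : 'rV[C]_n) 0 i != 0 -> R i x0.
  rewrite mxE eqxx /=; have [-> _|_] := eqVneq i x0; last by rewrite eqxx.
  by case: R_tol => R_refl _; apply: R_refl.
have delta_neq0 : delta_mx 0 x0 != 0 :> 'rV[C]_n.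
  by rewrite -sqnorm_gt0 sqnorm_delta ltr01.
have := qform_local_lt (connect0 e x0) delta_neq0 delta_supp.
by rewrite qform_delta sqnorm_delta mulr1 mxE /graph_edge eqxx andbF.
Qed.

Lemma exists_local_bound_lt k : exists2 mu, mu < l & local_bound k mu.
Proof.
have [x0k|not_x0k] := boolP (comp k); last first.
  exists 0 => [|x x_supp]; first exact: top_eigenvalue_gt0.
  rewrite (qform_adjmx_supp _ _ x_supp) adjmx_pred0 ?qform0 ?mul0r // => i.
  by apply/negP => /andP[x0i /(comp_rel_closed x0i)]; apply/negP.
pose S := [predI comp & R^~ k].
have [mu [mu_real [w w_neq0 w_eigen] mu_top _]] :=
  hermitian_top_eigenvalue x0 (@adjmx_hermitian C n R S R_tol).
exists mu => [|x x_supp]; last by rewrite (qform_adjmx_supp _ _ x_supp) mu_top.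
have [mu_le0|mu_gt0] := real_leP mu_real (real0 C).
  exact: le_lt_trans mu_le0 (top_eigenvalue_gt0).
have w_supp := adjmx_eigen_supp (lt0r_neq0 mu_gt0) w_eigen.
have w_suppk i : w 0 i != 0 -> R i k by move=> /w_supp /andP[].
have := qform_local_lt x0k w_neq0 w_suppk.
have compS : [predI comp & S] =1 S by move=> i; rewrite /= !inE andbA andbb.
rewrite (qform_adjmx_supp _ _ w_supp) (@eq_adjmx C n R _ _ compS).
rewrite (qform_eigen w_eigen).
by rewrite ltr_pM2r // sqnorm_gt0.
Qed.

End TopEigenvalue.

Lemma no_dominant_psd_not_sos :
  exists a : 'M[C]_n, [/\ inA R a, psdA R a & ~ sosA R a].
Proof.
have [l [l_real [v v_neq0 v_eigen] l_top l_eigen]] :=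
  hermitian_top_eigenvalue x0 (@adjmx_hermitian C n R comp R_tol).
have [t t_lt t_bound] := exists_uniform_lt l_real (@local_bound_mono)
  (exists_local_bound_lt l_real l_top l_eigen).
pose W := t%:M - A; pose M := map_mx conjC v^T *m v.
have W_supp i j : ~~ R j i -> W i j = 0.
  case: R_tol => R_refl R_sym not_Rji; rewrite !mxE.
  have /negPf-> : i != j by apply: contraNneq not_Rji => ->.
  by rewrite /graph_edge R_sym (negPf not_Rji) !andbF subr0.
have W_local m x : (forall i, x 0 i != 0 -> R i m) -> 0 <= qform W x.
  move=> x_supp; rewrite qformB qform_scalar subr_ge0.
  exact: (t_bound m x x_supp).
exists (Tmap R M).
split=> [||/(sosA_mxtrace_ge0 W_supp W_local)]; first by exists M.
  by exists M; split; first exact: psd_rank1.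
rewrite mxtrace_mul_Tmap // mxtrace_mul_rank1 qformB qform_scalar.
rewrite (qform_eigen v_eigen) -mulrBl pmulr_lge0 ?sqnorm_gt0 // subr_ge0.
by rewrite lt_geF.
Qed.

End Component.

Theorem proposition4p15 (K : realType) (n : nat) (R : rel 'I_n) :
  tolerance R ->
  (forall a : 'M[complex K]_n, inA R a -> psdA R a -> sosA R a) ->
  dominant_in_each_component R.
Proof.
move=> R_tol R_sos x0.
have [v /andP[x0v /dominantP v_dom]|no_dom] :=
  pickP [pred v | connect (graph_edge R) x0 v && dominantb R v].
  by exists v.
have no_dominant k : connect (graph_edge R) x0 k -> ~ dominant R k.
  by move=> x0k /dominantP k_dom; have := no_dom k; rewrite /= x0k k_dom.
have [a [a_inA a_psd a_not_sos]] :=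
  no_dominant_psd_not_sos (complex K) R_tol no_dominant.
by case: a_not_sos; apply: R_sos.
Qed.
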